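(* Let $F$ be a DQCNF. Applying autarky-reduction steps to $F$ as long as possible, in any order, yields the largest lean sub-DQCNF (the lean kernel) of $F$.
   Context: A DQCNF $F$ consists of a set $X$ of universal variables, a set $Y$ of existential variables, a dependency set $D_y\subseteq X$ for each $y\in Y$, and a matrix, a finite set of clauses over $X\cup Y$. An autarky for $F$ is a partial map $\varphi$ from a subset $\mathrm{dom}(\varphi)\subseteq Y$ to Boolean functions, where $\varphi(y)$ depends only on variables in $D_y$, such that every clause $C$ of $F$ either contains no variable of $\mathrm{dom}(\varphi)$ (then $\varphi$ does not touch $C$), or becomes a tautology (identically true as a function of all remaining variables) after substituting $\varphi(y)$ for each $y\in\mathrm{dom}(\varphi)$ occurring in $C$. An autarky is trivial if it touches no clause. $F$ is lean if it has no non-trivial autarky. A sub-DQCNF of $F$ is a DQCNF with the same variables and dependency sets whose matrix is a subset of the matrix of $F$; the lean kernel of $F$ is its largest lean sub-DQCNF (w.r.t. inclusion of clause sets). $F[\varphi]$ denotes the DQCNF with the same variables and dependency sets as $F$ whose matrix consists of the clauses of $F$ not touched by $\varphi$. An autarky-reduction step replaces a DQCNF $G$ by $G[\varphi]$ for some non-trivial autarky $\varphi$ of $G$. *)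

From mathcomp Require Import all_boot.
From Stdlib Require Import Relations.
Set Implicit Arguments. Unset Strict Implicit. Unset Printing Implicit Defensive.

(* Universal variables: finite type [U]; existential variables: finite type [E].
   Variables are [U + E]; a literal is (variable, polarity) where polarity
   [true] means the positive literal. *)
Section DQCNF.
Variables U E : finType.

Definition var := (U + E)%type.
Definition lit := (var * bool)%type.
Definition clause := {set lit}.

Record dqcnf := DQCNF {
  dep : {ffun E -> {set U}};
  matrix : {set clause} }.

Definition uassign := U -> bool.

Definition depends_only (D : {set U}) (f : uassign -> bool) : Prop :=
  forall a b : uassign, (forall u, u \in D -> a u = b u) -> f a = f b.

(* A partial map is given by its domain [dom] and values [phi]
   (values outside [dom] are irrelevant). *)
Definition touches (dom : {set E}) (C : clause) : bool :=
  [exists l in C, if l.1 is inr y then y \in dom else false].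

Definition taut_after (dom : {set E}) (phi : E -> uassign -> bool)
    (C : clause) : Prop :=
  forall (a : uassign) (b : E -> bool),
    exists2 l, l \in C &
      (match l.1 with
       | inl u => a u
       | inr y => if y \in dom then phi y a else b y
       end) = l.2.

Definition autarky (F : dqcnf) (dom : {set E}) (phi : E -> uassign -> bool)
  : Prop :=
  (forall y, y \in dom -> depends_only (dep F y) (phi y)) /\
  (forall C, C \in matrix F -> touches dom C -> taut_after dom phi C).

Definition trivial_aut (F : dqcnf) (dom : {set E}) : Prop :=
  forall C, C \in matrix F -> ~~ touches dom C.

Definition lean (F : dqcnf) : Prop :=
  forall dom phi, autarky F dom phi -> trivial_aut F dom.

Definition subdq (G F : dqcnf) : Prop :=
  dep G = dep F /\ matrix G \subset matrix F.

Definition apply_aut (F : dqcnf) (dom : {set E}) : dqcnf :=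
  DQCNF (dep F) [set C in matrix F | ~~ touches dom C].

Definition red_step (G H : dqcnf) : Prop :=
  exists dom phi, autarky G dom phi /\ ~ trivial_aut G dom /\
                  H = apply_aut G dom.

Definition is_lean_kernel (F K : dqcnf) : Prop :=
  subdq K F /\ lean K /\ (forall H, subdq H F -> lean H -> subdq H K).

End DQCNF.

From mathcomp Require Import all_boot.
From Stdlib Require Import Relations Classical.

(* Every lean sub-DQCNF H of F survives each reduction step G ~> G[phi]: the
   autarky phi of G restricts to an autarky of H, which must be trivial since
   H is lean, so phi touches no clause of H.  Hence every intermediate result
   contains all lean sub-DQCNFs of F, and an irreducible end result is itself
   lean, hence the largest one. *)

Section LeanKernel.
Set Implicit Arguments.
Variables U E : finType.
Implicit Types F G H X Y : dqcnf U E.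

Lemma subdq_refl F : subdq F F.
Proof. by split. Qed.

Lemma subdq_trans F G H : subdq H G -> subdq G F -> subdq H F.
Proof.
move=> [dHG sHG] [dGF sGF]; split; first by rewrite dHG.
exact: subset_trans sGF.
Qed.

Lemma apply_aut_subdq G dom : subdq (apply_aut G dom) G.
Proof. by split=> //; apply/subsetP=> C; rewrite inE => /andP []. Qed.

Lemma autarky_subdq H G dom phi :
  subdq H G -> autarky G dom phi -> autarky H dom phi.
Proof.
move=> [dH sHG] [phi_dep phi_taut]; split; first by rewrite dH.
by move=> C CH; apply: phi_taut; exact: (subsetP sHG).
Qed.

Lemma lean_subdq_apply_aut H G dom phi :
  subdq H G -> lean H -> autarky G dom phi -> subdq H (apply_aut G dom).
Proof.
move=> sHG leanH autG; have [dH sH] := sHG.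
have trivH := leanH dom phi (autarky_subdq sHG autG).
split=> //; apply/subsetP=> C CH.
by rewrite inE (subsetP sH _ CH) trivH.
Qed.

Lemma irreducible_lean G : (forall H, ~ red_step G H) -> lean G.
Proof.
move=> irredG dom phi autG; apply: NNPP => nontriv.
by apply: (irredG (apply_aut G dom)); exists dom, phi.
Qed.

Definition kernel_bound F X : Prop :=
  subdq X F /\ forall H, subdq H F -> lean H -> subdq H X.

Lemma kernel_bound_refl F : kernel_bound F F.
Proof. by split=> [|H sHF _]; [exact: subdq_refl | exact: sHF]. Qed.

Lemma kernel_bound_red_step F X Y :
  red_step X Y -> kernel_bound F X -> kernel_bound F Y.
Proof.
move=> [dom [phi [autX [_ ->]]]] [sXF boundX]; split.
  exact: subdq_trans (apply_aut_subdq X dom) sXF.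
by move=> H sHF leanH; apply: lean_subdq_apply_aut autX => //; apply: boundX.
Qed.

Lemma kernel_bound_reduction F X Y :
  clos_refl_trans (dqcnf U E) (@red_step U E) X Y ->
  kernel_bound F X -> kernel_bound F Y.
Proof.
elim=> {X Y} [X Y stepXY | X | X Y Z _ IHXY _ IHYZ] //.
- exact: kernel_bound_red_step.
- by move=> /IHXY /IHYZ.
Qed.

End LeanKernel.

Theorem lemma4 (U E : finType) (F G : dqcnf U E) :
  clos_refl_trans (dqcnf U E) (@red_step U E) F G ->
  (forall H, ~ red_step G H) ->
  is_lean_kernel F G.
Proof.
move=> redFG irredG.
have [sGF boundG] := kernel_bound_reduction redFG (kernel_bound_refl F).
by split; [exact: sGF | split; [exact: irreducible_lean | exact: boundG]].
Qed.
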